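(* For all $u_1, \ldots, u_n \in \mathcal{L}_s$, there exists a unique subset $\{v_1, \ldots, v_m\} \subseteq \{u_1, \ldots, u_n\}$ such that $\max(u_1, \ldots, u_n) =_{\mathcal{L}} \max(v_1, \ldots, v_m)$ and $\max(v_1, \ldots, v_m) \in \mathcal{L}_r$.
   Context: $\mathcal{X}$ is a countable set of variables; a valuation is $\sigma\colon\mathcal{X}\to\mathbb{N}$. For finite $E\subseteq\mathcal{X}$, $x\in\mathcal{X}$, $S\in\mathbb{N}$, the sublevels $A(E,x,S)$ and $B(E,S)$ have values $[A(E,x,S)]_\sigma = 0$ if some $y\in E$ has $\sigma(y)=0$, and $\sigma(x)+S$ otherwise; $[B(E,S)]_\sigma=0$ if some $y\in E$ has $\sigma(y)=0$, and $S$ otherwise. $\mathcal{L}_s$ is the set of sublevels $A(E,x,S)$ with $x\in E$ and $B(E,S)$ with $S>0$. $t_1\leqslant_{\mathcal{L}} t_2$ (resp. $t_1 =_{\mathcal{L}} t_2$) means $[t_1]_\sigma\le[t_2]_\sigma$ (resp. $=$) for every valuation $\sigma$; $\max$ of a finite family is evaluated pointwise (empty max has value $0$). Two sublevels $u,v$ are incomparable if neither $u\leqslant_{\mathcal{L}} v$ nor $v\leqslant_{\mathcal{L}} u$. A minimal representation is a formal expression $\max(v_1,\ldots,v_m)$ where $\{v_1,\ldots,v_m\}$ is a finite set of pairwise incomparable elements of $\mathcal{L}_s$; $\mathcal{L}_r$ is the set of minimal representations. *)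

From HB Require Import structures.
From mathcomp Require Import all_boot.
From mathcomp Require Import finmap.
Set Implicit Arguments. Unset Strict Implicit. Unset Printing Implicit Defensive.


Definition valuation := nat -> nat.

(* Sublevels: SA E x S is A(E,x,S), SB E S is B(E,S). *)
Inductive sublevel :=
| SA of {fset nat} & nat & nat
| SB of {fset nat} & nat.

Definition sublevel_code (u : sublevel) : option nat * {fset nat} * nat :=
  match u with
  | SA E x s => (Some x, E, s)
  | SB E s => (None, E, s)
  end.
Definition sublevel_decode (c : option nat * {fset nat} * nat) : sublevel :=
  match c with
  | (Some x, E, s) => SA E x s
  | (None, E, s) => SB E s
  end.
Lemma sublevel_codeK : cancel sublevel_code sublevel_decode.
Proof. by case. Qed.
HB.instance Definition _ := Equality.copy sublevel (can_type sublevel_codeK).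

Definition eval (t : sublevel) (sigma : valuation) : nat :=
  match t with
  | SA E x s => if [exists y : E, sigma (val y) == 0] then 0 else sigma x + s
  | SB E s => if [exists y : E, sigma (val y) == 0] then 0 else s
  end.

Definition in_Ls (t : sublevel) : Prop :=
  match t with
  | SA E x s => x \in E
  | SB E s => 0 < s
  end.

Definition le_L (t1 t2 : sublevel) : Prop :=
  forall sigma : valuation, eval t1 sigma <= eval t2 sigma.

Definition incomparable (u v : sublevel) : Prop := ~ le_L u v /\ ~ le_L v u.

(* pointwise value of max of a finite family (empty max = 0) *)
Definition eval_max (U : seq sublevel) (sigma : valuation) : nat :=
  \max_(u <- U) eval u sigma.

Definition eq_max (U V : seq sublevel) : Prop :=
  forall sigma : valuation, eval_max U sigma = eval_max V sigma.

(* max(V) is a minimal representation, i.e. V (as a set) is a finite set of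
   pairwise incomparable elements of L_s *)
Definition in_Lr (V : seq sublevel) : Prop :=
  (forall v, v \in V -> in_Ls v) /\
  (forall v w, v \in V -> w \in V -> v != w -> incomparable v w).

From mathcomp Require Import all_boot finmap zify.
Set Implicit Arguments. Unset Strict Implicit. Unset Printing Implicit Defensive.

(* On L_s the order <=_L is decidable by a syntactic test: the support may
   only shrink and the constant parts must compare, as testing against
   valuations that are 1 everywhere except for one spike shows.  Moreover each
   v in L_s is join-prime: if [v] <= max W pointwise then v <=_L w for a single
   w in W, found by evaluating at the valuation that vanishes outside the
   support of v and spikes above all constants of W at the variable of v.
   Hence the maximal elements of U represent max U, and any incomparable
   representative drawn from U must consist of exactly these maxima. *)

Section MaximalElements.

Variables (T : eqType) (r : rel T).
Hypotheses (r_refl : reflexive r) (r_trans : transitive r)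
  (r_anti : antisymmetric r).

Definition maximal_in (s : seq T) (x : T) : bool :=
  all (fun y => r x y ==> (y == x)) s.

Lemma maximal_inP s x :
  reflect {in s, forall y, r x y -> y = x} (maximal_in s x).
Proof.
apply: (iffP allP) => [max_x y ys rxy | max_x y ys].
  by apply/eqP; exact: implyP (max_x y ys) rxy.
by apply/implyP => /(max_x y ys) ->.
Qed.

Lemma count_lt_subpred (a b : pred T) s x :
  subpred a b -> x \in s -> b x -> ~~ a x -> count a s < count b s.
Proof.
move=> sub_ab xs bx nax.
have split_b : count b s = count a s + count (predD b a) s.
  rewrite -count_predUI -[LHS]addn0 -(count_pred0 s).
  congr (_ + _); apply: eq_count => y /=.
    by case: (boolP (a y)) => [/sub_ab -> | _] //=.
  by case: (a y).
rewrite split_b -addn1 leq_add2l -has_count.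
by apply/hasP; exists x => //=; rewrite bx nax.
Qed.

Lemma exists_maximal_above s x :
  x \in s -> exists2 y, y \in s & r x y && maximal_in s y.
Proof.
have [n] := ubnP (count (r x) s); elim: n x => // n IHn x lt_n xs.
have [max_x | /allPn[y ys]] := boolP (maximal_in s x).
  by exists x; rewrite ?r_refl.
rewrite negb_imply => /andP[rxy neq_yx].
have not_ryx : ~~ r y x.
  by apply: contra neq_yx => ryx; rewrite (@r_anti x y) ?rxy.
have lt_count : count (r y) s < count (r x) s.
  by apply: (count_lt_subpred (x := x)) => // z; exact: r_trans.
have [z zs /andP[ryz max_z]] := IHn y (leq_trans lt_count lt_n) ys.
by exists z => //; rewrite (r_trans rxy ryz).
Qed.

End MaximalElements.

Lemma exists_ge_of_le_bigmax (I : eqType) (s : seq I) (F : I -> nat) a :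
  0 < a -> a <= \max_(i <- s) F i -> exists2 i, i \in s & a <= F i.
Proof.
move=> a_gt0 le_a; apply/hasP; apply: contraLR le_a => /hasPn lt_F.
rewrite -ltnNge -(prednK a_gt0) ltnS; apply/bigmax_leqP_seq => i i_s _.
by rewrite -ltnS prednK // ltnNge lt_F.
Qed.

Lemma exists_zeroP (E : {fset nat}) (sigma : valuation) :
  reflect (exists2 y, y \in E & sigma y = 0) [exists y : E, sigma (val y) == 0].
Proof.
apply: (iffP existsP) => [[y /eqP y0] | [y yE y0]].
  by exists (val y) => //; exact: fsvalP.
by exists (FSetSub yE); rewrite /= y0.
Qed.

Definition supp (u : sublevel) : {fset nat} :=
  match u with SA E _ _ | SB E _ => E end.

Definition cst (u : sublevel) : nat :=
  match u with SA _ _ s | SB _ s => s end.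

Definition raw_eval (u : sublevel) (sigma : valuation) : nat :=
  match u with SA _ x s => sigma x + s | SB _ s => s end.

Lemma eval_le_raw u sigma : eval u sigma <= raw_eval u sigma.
Proof. by case: u => [E x s|E s] /=; case: ifP. Qed.

Lemma eval_raw u sigma :
  {in supp u, forall y, 0 < sigma y} -> eval u sigma = raw_eval u sigma.
Proof.
move=> pos; case: u pos => [E x s|E s] /= pos;
  case: exists_zeroP => // [[y /pos]]; by rewrite lt0n => /eqP.
Qed.

Lemma eval_supp0 u sigma y : y \in supp u -> sigma y = 0 -> eval u sigma = 0.
Proof.
by case: u => [E x s|E s] /= yE y0; case: exists_zeroP => // [[]]; exists y.
Qed.

Lemma eval0_or_supp_gt0 u sigma :
  eval u sigma = 0 \/ {in supp u, forall y, 0 < sigma y}.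
Proof.
case: (exists_zeroP (supp u) sigma) => [[y yu y0] | no_zero].
  by left; exact: eval_supp0 yu y0.
by right => y yu; rewrite lt0n; apply/eqP => y0; apply: no_zero; exists y.
Qed.

Lemma supp_gt0 u sigma : 0 < eval u sigma -> {in supp u, forall y, 0 < sigma y}.
Proof. by case: (eval0_or_supp_gt0 u sigma) => [-> |]. Qed.

Lemma raw_eval_gt0 u sigma :
  in_Ls u -> {in supp u, forall y, 0 < sigma y} -> 0 < raw_eval u sigma.
Proof. by case: u => [E x s|E s] /= u_Ls pos; rewrite ?ltn_addr ?pos. Qed.

Lemma raw_eval_mono u sigma tau :
  (forall y, sigma y <= tau y) -> raw_eval u sigma <= raw_eval u tau.
Proof. by case: u => [E x s|E s] //= le_st; rewrite leq_add2r. Qed.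

(* In the [SB]/[SA] case, [x'] lies in the support, so it is at least 1
   wherever the value is nonzero. *)
Definition le_raw (u v : sublevel) : bool :=
  match u, v with
  | SA _ x s, SA _ x' s' => (x == x') && (s <= s')
  | SA _ _ _, SB _ _ => false
  | SB _ s, SA _ _ s' => s <= s'.+1
  | SB _ s, SB _ s' => s <= s'
  end.

Definition le_sublevel (u v : sublevel) : bool :=
  fsubset (supp v) (supp u) && le_raw u v.

Lemma le_sublevel_refl : reflexive le_sublevel.
Proof.
by case=> [E x s|E s]; rewrite /le_sublevel /= fsubset_refl ?eqxx leqnn.
Qed.

Lemma le_sublevel_trans : transitive le_sublevel.
Proof.
move=> v u w /andP[sub_vu le_uv] /andP[sub_wv le_vw].
rewrite /le_sublevel (fsubset_trans sub_wv sub_vu) /=.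
by case: u v w le_uv le_vw {sub_vu sub_wv}
  => [? ? ?|? ?] [? ? ?|? ?] [? ? ?|? ?] //=; lia.
Qed.

Lemma le_sublevel_anti : antisymmetric le_sublevel.
Proof.
move=> u v /andP[/andP[sub_vu le_uv] /andP[sub_uv le_vu]].
have: supp u = supp v by apply/eqP; rewrite eqEfsubset sub_uv.
case: u v le_uv le_vu {sub_vu sub_uv}
  => [E x s|E s] [E' x' s'|E' s'] //= le_uv le_vu ->.
  by case/andP: le_uv => /eqP-> ?; case/andP: le_vu => _ ?; congr SA; lia.
by congr SB; lia.
Qed.

Definition spike (x n : nat) : valuation := fun y => if y == x then n else 1.

(* For [cst v <= n], the spike [n.+2] at the variable of [u] can only be
   matched by a sublevel [v] sharing that variable. *)
Definition probe (u : sublevel) (n : nat) : valuation :=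
  if u is SA _ x _ then spike x n.+2 else fun=> 1.

Lemma probe_gt0 u n y : 0 < probe u n y.
Proof. by case: u => [E x s|E s] //=; rewrite /spike; case: eqP. Qed.

Lemma le_raw_probe u v n :
  cst v <= n -> raw_eval u (probe u n) <= raw_eval v (probe u n) -> le_raw u v.
Proof.
case: u v => [E x s|E s] [E' x' s'|E' s'] //=; rewrite /spike ?eqxx; try lia.
by rewrite eq_sym; case: eqP => /=; lia.
Qed.

Lemma le_LP u v : in_Ls u -> in_Ls v -> reflect (le_L u v) (le_sublevel u v).
Proof.
move=> u_Ls v_Ls.
apply: (iffP andP) => [[/fsubsetP sub_vu le_uv] sigma | le_uv].
  case: (eval0_or_supp_gt0 u sigma) => [-> // | pos_u].
  have pos_v : {in supp v, forall y, 0 < sigma y} by move=> y /sub_vu/pos_u.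
  rewrite (eval_raw pos_u) (eval_raw pos_v).
  case: u v le_uv v_Ls pos_v {u_Ls sub_vu pos_u} => [E x s|E s] [E' x' s'|E' s']
    //= le_uv x'_E' pos_v.
    by case/andP: le_uv => /eqP-> le_ss'; rewrite leq_add2l.
  by have := pos_v x' x'_E'; lia.
split.
  apply/fsubsetP => y yv; apply/negPn/negP => yNu.
  have pos_u : {in supp u, forall z, 0 < spike y 0 z}.
    by move=> z; rewrite /spike; case: eqP => // -> yu; rewrite yu in yNu.
  have := le_uv (spike y 0); rewrite (eval_supp0 (sigma := spike y 0) yv).
    by rewrite leqn0 (eval_raw pos_u) eqn0Ngt raw_eval_gt0.
  by rewrite /spike eqxx.
have pos w : {in supp w, forall y, 0 < probe u (cst v) y}.
  by move=> y _; exact: probe_gt0.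
apply: (le_raw_probe (n := cst v)) => //.
by rewrite -(eval_raw (pos u)) -(eval_raw (pos v)).
Qed.

Definition restrict (E : {fset nat}) (sigma : valuation) : valuation :=
  fun y => if y \in E then sigma y else 0.

Lemma exists_sublevel_above_of_le_max v W :
  in_Ls v -> (forall sigma, eval v sigma <= eval_max W sigma) ->
  exists2 w, w \in W & le_sublevel v w.
Proof.
move=> v_Ls le_vW; set n := \max_(w <- W) cst w.
set sigma := restrict (supp v) (probe v n).
have pos_v : {in supp v, forall y, 0 < sigma y}.
  by move=> y yv; rewrite /sigma /restrict yv probe_gt0.
have eval_v : eval v sigma = raw_eval v (probe v n).
  rewrite (eval_raw pos_v).
  by case: v v_Ls @sigma {le_vW pos_v} => [E x s|E s] //= xE;
    rewrite /restrict xE.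
have eval_v_gt0 : 0 < eval v sigma by rewrite (eval_raw pos_v) raw_eval_gt0.
have [w wW le_vw] := exists_ge_of_le_bigmax eval_v_gt0 (le_vW sigma).
exists w => //; apply/andP; split.
  apply/fsubsetP => y yw; have := supp_gt0 (leq_trans eval_v_gt0 le_vw) yw.
  by rewrite /sigma /restrict; case: (y \in supp v).
apply: (le_raw_probe (n := n)); first exact: leq_bigmax_seq.
rewrite -eval_v; apply: leq_trans le_vw (leq_trans (eval_le_raw _ _) _).
by apply: raw_eval_mono => y; rewrite /sigma /restrict; case: ifP.
Qed.

Lemma eval_max_ge u U sigma : u \in U -> eval u sigma <= eval_max U sigma.
Proof. by move=> uU; exact: leq_bigmax_seq. Qed.

Lemma eval_max_le_dominated U V :
  (forall u, u \in U -> exists2 v, v \in V & le_L u v) ->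
  forall sigma, eval_max U sigma <= eval_max V sigma.
Proof.
move=> dom sigma; apply/bigmax_leqP_seq => u uU _.
have [v vV le_uv] := dom u uU.
exact: leq_trans (le_uv sigma) (eval_max_ge _ vV).
Qed.

Lemma exists_maximal_sublevel U u :
  u \in U -> exists2 v, v \in U & le_sublevel u v && maximal_in le_sublevel U v.
Proof.
exact: (exists_maximal_above le_sublevel_refl le_sublevel_trans le_sublevel_anti).
Qed.

Definition maxima (U : seq sublevel) : seq sublevel :=
  [seq v <- U | maximal_in le_sublevel U v].

Section Maxima.

Variable U : seq sublevel.
Hypothesis U_Ls : {in U, forall u, in_Ls u}.

Lemma mem_maxima v :
  (v \in maxima U) = (v \in U) && maximal_in le_sublevel U v.
Proof. by rewrite mem_filter andbC. Qed.

Lemma maxima_subset : {subset maxima U <= U}.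
Proof. by move=> v; rewrite mem_maxima => /andP[]. Qed.

Lemma eq_max_maxima : eq_max U (maxima U).
Proof.
move=> sigma; apply/eqP; rewrite eqn_leq !eval_max_le_dominated // => u uU.
  by exists u => //; exact: maxima_subset.
have [v vU /andP[le_uv max_v]] := exists_maximal_sublevel uU.
by exists v; [rewrite mem_maxima vU | apply/le_LP: le_uv; exact: U_Ls].
Qed.

Lemma in_Lr_maxima : in_Lr (maxima U).
Proof.
split=> [v /maxima_subset/U_Ls // | v w].
rewrite !mem_maxima.
move=> /andP[vU /maximal_inP max_v] /andP[wU /maximal_inP max_w].
have [v_Ls w_Ls] := (U_Ls vU, U_Ls wU).
move=> neq_vw; split.
  by move/(le_LP v_Ls w_Ls)/(max_v w wU) => eq_wv; rewrite eq_wv eqxx in neq_vw.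
by move/(le_LP w_Ls v_Ls)/(max_w v vU) => eq_vw; rewrite eq_vw eqxx in neq_vw.
Qed.

Lemma maxima_unique W :
  {subset W <= U} -> eq_max U W -> in_Lr W -> W =i maxima U.
Proof.
move=> WU eqUW [W_Ls W_incomp].
have below_W v : v \in U -> exists2 w, w \in W & le_sublevel v w.
  move=> vU; apply: exists_sublevel_above_of_le_max (U_Ls vU) _ => sigma.
  by rewrite -eqUW; exact: eval_max_ge.
move=> x; apply/idP/idP => [xW | ].
  have [v vU /andP[le_xv max_v]] := exists_maximal_sublevel (WU x xW).
  have [w wW le_vw] := below_W v vU.
  have eq_xw : x = w.
    have [// | neq_xw] := eqVneq x w.
    have [not_le_xw _] := W_incomp x w xW wW neq_xw; case: not_le_xw.
    exact/(le_LP (W_Ls x xW) (W_Ls w wW))/(le_sublevel_trans le_xv le_vw).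
  have eq_vx : v = x by apply: le_sublevel_anti; rewrite le_xv eq_xw le_vw.
  by rewrite -eq_vx mem_maxima vU.
rewrite mem_maxima => /andP[xU /maximal_inP max_x].
have [w wW le_xw] := below_W x xU.
by rewrite -(max_x w (WU w wW) le_xw).
Qed.

End Maxima.

Theorem proposition34 (U : seq sublevel) :
  (forall u, u \in U -> in_Ls u) ->
  exists V : seq sublevel,
    [/\ {subset V <= U}, eq_max U V, in_Lr V &
        forall W : seq sublevel,
          {subset W <= U} -> eq_max U W -> in_Lr W -> W =i V].
Proof.
move=> U_Ls; exists (maxima U); split.
- exact: maxima_subset.
- exact: eq_max_maxima.
- exact: in_Lr_maxima.
- exact: maxima_unique.
Qed.
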